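(* Let $n \leq 9$ and let $G$ be a connected $n$-vertex graph with maximum degree at most $3$ that is not isomorphic to any of $C_4$, $C_4'$, $K_4$. Then $\iota(G, C_4) \leq 1$.
   Context: All graphs are finite and simple. For $D \subseteq V(G)$, $N[D]$ is the closed neighbourhood of $D$ and $G - N[D]$ the subgraph induced by $V(G)\setminus N[D]$. A set $D \subseteq V(G)$ is a $C_4$-isolating set of $G$ if $G - N[D]$ contains no subgraph isomorphic to the $4$-cycle $C_4$; $\iota(G, C_4)$ is the minimum size of such a set. $C_4'$ is the diamond graph on $\{1,2,3,4\}$ with edges $12,23,34,41,13$. *)

From mathcomp Require Import all_boot.
Set Implicit Arguments. Unset Strict Implicit. Unset Printing Implicit Defensive.

Definition simple_graph (T : finType) (e : rel T) : Prop :=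
  symmetric e /\ irreflexive e.

Definition connected_graph (T : finType) (e : rel T) : Prop :=
  forall x y : T, connect e x y.

Definition neighbours (T : finType) (e : rel T) (x : T) : {set T} := [set y | e x y].

Definition max_deg_le (T : finType) (e : rel T) (k : nat) : Prop :=
  forall x : T, #|neighbours e x| <= k.

Definition closed_nbhd (T : finType) (e : rel T) (D : {set T}) : {set T} :=
  [set v | (v \in D) || [exists u in D, e u v]].

Definition has_C4_in (T : finType) (e : rel T) (S : {set T}) : Prop :=
  exists a b c d : T,
    [/\ [/\ a \in S, b \in S, c \in S & d \in S],
        uniq [:: a; b; c; d] &
        [/\ e a b, e b c, e c d & e d a]].

Definition C4_isolating (T : finType) (e : rel T) (D : {set T}) : Prop :=
  ~ has_C4_in e (~: closed_nbhd e D).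

Definition iota_C4_le (T : finType) (e : rel T) (k : nat) : Prop :=
  exists D : {set T}, #|D| <= k /\ C4_isolating e D.

Definition isomorphic_to4 (T : finType) (e : rel T) (h : rel 'I_4) : Prop :=
  exists f : T -> 'I_4, bijective f /\ forall x y, e x y = h (f x) (f y).

(* C_4 on {1,2,3,4} ~ {0,1,2,3}: edges 01,12,23,30 *)
Definition C4_rel : rel 'I_4 := fun i j =>
  let a := nat_of_ord i in let b := nat_of_ord j in
  (a != b) && ((b == (a + 1) %% 4) || (a == (b + 1) %% 4)).

(* diamond C_4': C_4 plus the chord 13 (i.e. 0--2 here) *)
Definition C4'_rel : rel 'I_4 := fun i j =>
  C4_rel i j || ((nat_of_ord i == 0) && (nat_of_ord j == 2))
             || ((nat_of_ord i == 2) && (nat_of_ord j == 0)).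

Definition K4_rel : rel 'I_4 := fun i j => i != j.

From mathcomp Require Import all_boot.
From Stdlib Require Import Classical.
Set Implicit Arguments. Unset Strict Implicit. Unset Printing Implicit Defensive.

(* If no single vertex isolates the 4-cycles, then for every vertex v some
   4-cycle avoids N[v].  When v lies on a 4-cycle C, such a cycle is disjoint
   from C: a common vertex would be the vertex of C opposite v, and it would
   have two neighbours on each cycle, hence degree 4.
   Take a 4-cycle Q.  If it spans G, then G is C4, C4' or K4.  Otherwise some
   a in Q has a neighbour u off Q, and a 4-cycle P avoiding N[a] is disjoint
   from Q and misses u, so Q, {u} and P exhaust the at most 9 vertices.  An
   edge yz from P to Q is impossible: the 4-cycle avoiding N[y] is not Q, so
   it runs through u, giving u two neighbours in Q; then the 4-cycle avoiding
   N[z] can neither run through u nor be P.  Without such edges u has a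
   neighbour in P by connectivity, and the 4-cycle avoiding N[u] lies inside Q
   or inside P, each of which contains a neighbour of u. *)

Lemma in_set4P (T : finType) (a b c d x : T) :
  reflect [\/ x = a, x = b, x = c | x = d] (x \in [set a; b; c; d]).
Proof.
rewrite !inE -!orbA; apply: (iffP or4P) => -[] /eqP;
  by [constructor 1 | constructor 2 | constructor 3 | constructor 4].
Qed.

Lemma card_set4 (T : finType) (a b c d : T) :
  uniq [:: a; b; c; d] -> #|[set a; b; c; d]| = 4.
Proof.
have -> : [set a; b; c; d] = [set x in [:: a; b; c; d]].
  by apply/setP => x; rewrite !inE -!orbA ?orbF.
by rewrite cardsE => /card_uniqP.
Qed.

Section Graph.
Variables (T : finType) (e : rel T).
Hypothesis e_sym : symmetric e.

Lemma connected_cross (S : {set T}) x y : connected_graph e -> x \in S -> y \notin S ->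
  exists s t, [/\ s \in S, t \notin S & e s t].
Proof.
move=> conn xS yS.
have [/existsP[s /existsP[t /and3P[sS tS st]]] | noCross] :=
  boolP [exists s, exists t, [&& s \in S, t \notin S & e s t]]; first by exists s, t.
have cross s t : s \in S -> t \notin S -> ~~ e s t.
  move=> sS tS; apply: contra noCross => st.
  by apply/existsP; exists s; apply/existsP; exists t; rewrite sS tS st.
have closedS : closed e S.
  move=> s t st; apply/idP/idP => [sS | tS]; apply: contraT.
    by move=> /(cross s t sS); rewrite st.
  by move=> /(cross t s tS); rewrite e_sym st.
by have := closed_connect closedS (conn x y); rewrite xS (negbTE yS).
Qed.

Definition far (v : T) : {set T} := ~: closed_nbhd e [set v].

Lemma in_far v x : (x \in far v) = (x != v) && ~~ e v x.
Proof.
rewrite !inE negb_or; congr (_ && ~~ _).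
by apply/existsP/idP => [[w /andP[/set1P-> //]] | vx]; exists v; rewrite inE eqxx.
Qed.

Definition cycle4 (a b c d : T) : bool :=
  uniq [:: a; b; c; d] && [&& e a b, e b c, e c d & e d a].

Definition C4_on (C : {set T}) : Prop :=
  exists a b c d, cycle4 a b c d /\ C = [set a; b; c; d].

Lemma has_C4_inP S : has_C4_in e S <-> exists2 C, C4_on C & C \subset S.
Proof.
split=> [[a [b [c [d [[aS bS cS dS] abcd [ab bc cd da]]]]]] | [C [a [b [c [d []]]]]]].
  exists [set a; b; c; d]; first by exists a, b, c, d; rewrite /cycle4 abcd ab bc cd da.
  by apply/subsetP => x /in_set4P[]->.
move=> /andP[abcd /and4P[ab bc cd da]] -> /subsetP CS.
by exists a, b, c, d; split=> //; split; apply: CS; rewrite !inE eqxx ?orbT.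
Qed.

Lemma card_C4 C : C4_on C -> #|C| = 4.
Proof. by move=> [a [b [c [d [/andP[abcd _] ->]]]]]; apply: card_set4. Qed.

Lemma C4_neq0 C : C4_on C -> C != set0.
Proof. by move=> C4; rewrite -card_gt0 card_C4. Qed.

Lemma C4_sub_eq C D : C4_on C -> C4_on D -> C \subset D -> C = D.
Proof. by move=> C4 D4 CD; apply/eqP; rewrite eqEcard CD card_C4 ?card_C4. Qed.

Lemma C4_two_nbrs C x : C4_on C -> x \in C ->
  exists n1 n2, [/\ n1 != n2, n1 \in C, n2 \in C, e x n1 & e x n2].
Proof.
move=> [a [b [c [d [/andP[abcd /and4P[ab bc cd da]] ->]]]]].
rewrite /= !inE !negb_or !andbT in abcd.
case/and3P: abcd => /and3P[_ ac _] /andP[_ bd] _.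
case/in_set4P=> ->.
- by exists b, d; rewrite !inE !eqxx ?orbT bd ab (e_sym a).
- by exists a, c; rewrite !inE !eqxx ?orbT ac bc (e_sym b).
- by exists b, d; rewrite !inE !eqxx ?orbT bd cd (e_sym c).
- by exists a, c; rewrite !inE !eqxx ?orbT ac da (e_sym d).
Qed.

Lemma C4_opposite C v x : C4_on C -> v \in C -> x \in C -> x != v -> ~~ e v x ->
  exists k1 k2, [/\ k1 != k2, e x k1, e x k2, e v k1 & e v k2].
Proof.
move=> [a [b [c [d [/andP[abcd /and4P[ab bc cd da]] ->]]]]].
rewrite /= !inE !negb_or !andbT in abcd.
case/and3P: abcd => /and3P[_ ac _] /andP[_ bd] _.
have ba : e b a by rewrite e_sym.
have cb : e c b by rewrite e_sym.
have dc : e d c by rewrite e_sym.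
have ad : e a d by rewrite e_sym.
case/in_set4P=> -> /in_set4P[]-> //; rewrite ?eqxx // => _;
  rewrite ?ab ?bc ?cd ?da ?ba ?cb ?dc ?ad // => _.
- by exists b, d.
- by exists a, c.
- by exists b, d.
- by exists a, c.
Qed.

Lemma C4_edge_closed C (S : {set T}) : C4_on C ->
  {in C &, forall x y, e x y -> (x \in S) = (y \in S)} ->
  C \subset S \/ [disjoint C & S].
Proof.
move=> [a [b [c [d [/andP[_ /and4P[ab bc cd _]] defC]]]]] closedS.
have [aC bC cC dC] : [/\ a \in C, b \in C, c \in C & d \in C].
  by rewrite defC !inE !eqxx ?orbT.
have sameS : {in C, forall x, (x \in S) = (a \in S)}.
  move=> x; rewrite defC => /in_set4P[]-> //.
  - by rewrite (closedS a b).
  - by rewrite -(closedS b c) // (closedS a b).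
  - by rewrite -(closedS c d) // -(closedS b c) // (closedS a b).
have [aS | aNS] := boolP (a \in S); [left | right; rewrite disjoints_subset];
  apply/subsetP => x xC.
  by rewrite sameS.
by rewrite inE sameS.
Qed.

End Graph.

Section MaxDegree3.
Variables (T : finType) (e : rel T).
Hypotheses (e_sym : symmetric e) (deg3 : max_deg_le e 3).

Lemma nbrs_not_split_2_2 (A : pred T) x k1 k2 m1 m2 :
  k1 != k2 -> m1 != m2 -> A k1 -> A k2 -> ~~ A m1 -> ~~ A m2 ->
  e x k1 -> e x k2 -> e x m1 -> e x m2 -> False.
Proof.
move=> k12 m12 k1A k2A m1A m2A xk1 xk2 xm1 xm2.
have sep y z : A y -> ~~ A z -> y != z by move=> yA; apply: contraNneq => <-.
have : #|[set k1; k2; m1; m2]| <= #|neighbours e x|.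
  by apply/subset_leq_card/subsetP => y /in_set4P[]->; rewrite inE.
rewrite card_set4; last by rewrite /= !inE !negb_or k12 m12 !sep.
by move=> /leq_trans/(_ (deg3 x)).
Qed.

Lemma C4_far_disjoint C P v :
  C4_on e C -> v \in C -> C4_on e P -> P \subset far e v -> [disjoint P & C].
Proof.
move=> C4 vC P4 /subsetP Pfar.
have farN m : m \in P -> ~~ e v m by move/Pfar; rewrite in_far => /andP[].
rewrite disjoints_subset; apply/subsetP => x xP; rewrite inE; apply/negP => xC.
have := Pfar x xP; rewrite in_far => /andP[xv vNx].
have [k1 [k2 [k12 xk1 xk2 vk1 vk2]]] := C4_opposite e_sym C4 vC xC xv vNx.
have [m1 [m2 [m12 m1P m2P xm1 xm2]]] := C4_two_nbrs e_sym P4 xP.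
exact: (nbrs_not_split_2_2 (A := e v)) k12 m12 vk1 vk2 (farN _ m1P) (farN _ m2P)
  xk1 xk2 xm1 xm2.
Qed.

End MaxDegree3.

Section NineVertices.
Variables (T : finType) (e : rel T).
Hypotheses (e_sym : symmetric e) (e_irr : irreflexive e) (deg3 : max_deg_le e 3).
Hypotheses (card9 : #|T| <= 9) (conn : connected_graph e).
Hypothesis far_C4 : forall v, has_C4_in e (far e v).

Lemma far_C4_on v : exists2 C, C4_on e C & C \subset far e v.
Proof. exact/has_C4_inP. Qed.

Section Partition.
Variables (Q P : {set T}) (u : T).
Hypotheses (Q4 : C4_on e Q) (P4 : C4_on e P) (PQ : [disjoint P & Q]).
Hypotheses (uQ : u \notin Q) (uP : u \notin P).

Lemma partition_cover x : [\/ x \in Q, x = u | x \in P].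
Proof.
have cover : u |: (Q :|: P) = [set: T].
  apply/eqP; rewrite eqEcard subsetT cardsT cardsU1 inE negb_or uQ uP.
  by rewrite cardsU setIC (disjoint_setI0 PQ) cards0 (card_C4 Q4) (card_C4 P4).
have := in_setT x; rewrite -cover !inE.
by case/orP=> [/eqP | /orP[]]; [constructor 2 | constructor 1 | constructor 3].
Qed.

Lemma C4_eq_Q R : C4_on e R -> u \notin R -> [disjoint R & P] -> R = Q.
Proof.
move=> R4 uR RP; apply: C4_sub_eq R4 Q4 _; apply/subsetP => x xR.
case: (partition_cover x) => // [xu | xP]; first by rewrite -xu xR in uR.
by rewrite (disjointFr RP xR) in xP.
Qed.

Lemma C4_eq_P R : C4_on e R -> u \notin R -> [disjoint R & Q] -> R = P.
Proof.
move=> R4 uR RQ; apply: C4_sub_eq R4 P4 _; apply/subsetP => x xR.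
case: (partition_cover x) => // [xQ | xu]; last by rewrite -xu xR in uR.
by rewrite (disjointFr RQ xR) in xQ.
Qed.

Lemma partition_no_cross_edge y z : y \in P -> z \in Q -> e y z -> False.
Proof.
move=> yP zQ yz.
have [R R4 Rfar] := far_C4_on y.
have RP := C4_far_disjoint e_sym deg3 P4 yP R4 Rfar.
have uR : u \in R.
  apply: contraT => uNR; have := subsetP Rfar z.
  by rewrite (C4_eq_Q R4 uNR RP) in_far yz andbF => /(_ zQ).
have [n1 [n2 [n12 n1R n2R un1 un2]]] := C4_two_nbrs e_sym R4 uR.
have nbrQ x : x \in R -> e u x -> x \in Q.
  move=> xR ux; case: (partition_cover x) => // [xu | xP].
    by rewrite xu e_irr in ux.
  by rewrite (disjointFr RP xR) in xP.
have [S S4 Sfar] := far_C4_on z.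
have SQ := C4_far_disjoint e_sym deg3 Q4 zQ S4 Sfar.
have uS : u \notin S.
  apply/negP => uS; have [m1 [m2 [m12 m1S m2S um1 um2]]] := C4_two_nbrs e_sym S4 uS.
  apply: (nbrs_not_split_2_2 deg3 (A := fun x => x \in Q)) n12 m12
    (nbrQ _ n1R un1) (nbrQ _ n2R un2) _ _ un1 un2 um1 um2; exact/negbT/(disjointFr SQ).
have := subsetP Sfar y.
by rewrite (C4_eq_P S4 uS SQ) in_far e_sym yz andbF => /(_ yP).
Qed.

Lemma partition_no_edge_to_u a y :
  {in P & Q, forall s t, ~~ e s t} -> a \in Q -> e a u -> y \in P -> e y u -> False.
Proof.
move=> noEdge aQ au yP yu.
have [R R4 Rfar] := far_C4_on u.
have farR x : x \in R -> (x != u) && ~~ e u x by move/(subsetP Rfar); rewrite in_far.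
have uR : u \notin R by apply/negP => /farR; rewrite eqxx.
have inQP x : x \in R -> (x \in Q) || (x \in P).
  move=> xR; case: (partition_cover x) => [-> | xu | ->]; rewrite ?orbT //.
  by rewrite -xu xR in uR.
have closedQ : {in R &, forall x x', e x x' -> (x \in Q) = (x' \in Q)}.
  move=> x x' xR x'R xx'.
  case/orP: (inQP x xR) => [xQ | xP]; case/orP: (inQP x' x'R) => [x'Q | x'P].
  - by rewrite xQ x'Q.
  - by have := noEdge x' x x'P xQ; rewrite e_sym xx'.
  - by have := noEdge x x' xP x'Q; rewrite xx'.
  - by rewrite (disjointFr PQ xP) (disjointFr PQ x'P).
case: (C4_edge_closed R4 closedQ) => [RQ | RQ].
  by have := farR a; rewrite (C4_sub_eq R4 Q4 RQ) e_sym au andbF => /(_ aQ).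
by have := farR y; rewrite (C4_eq_P R4 uR RQ) e_sym yu andbF => /(_ yP).
Qed.

End Partition.

Lemma C4_no_outer_edge Q a u : C4_on e Q -> a \in Q -> u \notin Q -> e a u -> False.
Proof.
move=> Q4 aQ uQ au.
have [P P4 Pfar] := far_C4_on a.
have PQ := C4_far_disjoint e_sym deg3 Q4 aQ P4 Pfar.
have uP : u \notin P by apply/negP => /(subsetP Pfar); rewrite in_far au andbF.
have [/existsP[y /existsP[z /and3P[yP zQ yz]]] | noEdge] :=
  boolP [exists y, exists z, [&& y \in P, z \in Q & e y z]].
  exact: partition_no_cross_edge Q4 P4 PQ uQ uP y z yP zQ yz.
have noEdgePQ : {in P & Q, forall s t, ~~ e s t}.
  move=> s t sP tQ; apply: contra noEdge => st.
  by apply/existsP; exists s; apply/existsP; exists t; rewrite sP tQ st.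
have /set0Pn[p pP] := C4_neq0 P4.
have [y [t [yP tP yt]]] := connected_cross e_sym conn pP (negbT (disjointFl PQ aQ)).
have tu : t = u.
  case: (partition_cover Q4 P4 PQ uQ uP t) => // [tQ | tP'].
    by have := noEdgePQ y t yP tQ; rewrite yt.
  by rewrite tP' in tP.
by subst t; exact: partition_no_edge_to_u Q4 P4 PQ uQ uP a y noEdgePQ aQ au yP yt.
Qed.

End NineVertices.

Section SpanningFourCycle.
Variables (T : finType) (e : rel T).
Hypotheses (e_sym : symmetric e) (e_irr : irreflexive e).

Lemma iso4_of_enum (h : rel 'I_4) a b c d :
  (forall x, x \in [:: a; b; c; d]) -> uniq [:: a; b; c; d] ->
  (forall i j : 'I_4, e (nth a [:: a; b; c; d] i) (nth a [:: a; b; c; d] j) = h i j) ->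
  isomorphic_to4 e h.
Proof.
move=> span abcd eh.
exists (fun x => inord (index x [:: a; b; c; d])); split.
  exists (fun i : 'I_4 => nth a [:: a; b; c; d] i).
    by move=> x; rewrite inordK ?index_mem // nth_index.
  by move=> i; apply: val_inj; rewrite index_uniq ?inord_val.
by move=> x y; rewrite -eh !inordK ?index_mem // !nth_index.
Qed.

Lemma spanning_C4_iso a b c d : cycle4 e a b c d -> [set: T] \subset [set a; b; c; d] ->
  [\/ isomorphic_to4 e C4_rel, isomorphic_to4 e C4'_rel | isomorphic_to4 e K4_rel].
Proof.
move=> /andP[abcd /and4P[ab bc cd da]] /subsetP spanT.
have span x : x \in [:: a; b; c; d].
  by have := spanT x (in_setT x); rewrite !inE -!orbA ?orbF.
have span' x : x \in [:: b; c; d; a] by have := span x; rewrite -(mem_rot 1).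
have bcda : uniq [:: b; c; d; a] by rewrite -(rot_uniq 1) in abcd.
case ac: (e a c); case bd: (e b d);
  [constructor 3 | constructor 2 | constructor 2 | constructor 1];
  [apply: iso4_of_enum span abcd _ | apply: iso4_of_enum span abcd _
  | apply: iso4_of_enum span' bcda _ | apply: iso4_of_enum span abcd _];
  by case=> [[|[|[|[|i]]]] ?] // [[|[|[|[|j]]]] ?] //=;
    first [by rewrite ?e_irr ?ab ?bc ?cd ?da ?ac ?bd
          | by rewrite e_sym ?ab ?bc ?cd ?da ?ac ?bd].
Qed.

End SpanningFourCycle.

Theorem lemma4 (T : finType) (e : rel T) :
  simple_graph e ->
  #|T| <= 9 ->
  connected_graph e ->
  max_deg_le e 3 ->
  ~ isomorphic_to4 e C4_rel ->
  ~ isomorphic_to4 e C4'_rel ->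
  ~ isomorphic_to4 e K4_rel ->
  iota_C4_le e 1.
Proof.
move=> [e_sym e_irr] card9 conn deg3 nC4 nC4' nK4.
apply: NNPP => noIso.
have C4_outside (D : {set T}) : #|D| <= 1 -> has_C4_in e (~: closed_nbhd e D).
  by move=> D1; apply: NNPP => noC4; apply: noIso; exists D.
have far_C4 v : has_C4_in e (far e v) by apply: C4_outside; rewrite cards1.
have /has_C4_inP[Q Q4 _] : has_C4_in e (~: closed_nbhd e set0).
  by apply: C4_outside; rewrite cards0.
have [QT | /subsetPn[x _ xQ]] := boolP ([set: T] \subset Q).
  case: Q4 QT => [a [b [c [d [abcd ->]]]]] /(spanning_C4_iso e_sym e_irr abcd).
  by case=> [/nC4 | /nC4' | /nK4].
have /set0Pn[a aQ] := C4_neq0 Q4.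
have [s [u [sQ uQ su]]] := connected_cross e_sym conn aQ xQ.
exact: (C4_no_outer_edge e_sym e_irr deg3 card9 conn far_C4 Q4 sQ uQ su).
Qed.
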